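(* Let $P^G=\{p^G(o_1o_2o_3|i_1i_2i_3)\}$ be the tripartite correlation defined in the context. Then there exist a finite set $\Lambda$, a probability distribution $(p_\lambda)_{\lambda\in\Lambda}$, single-party conditional distributions $p(o_1|i_1,\lambda)$, and bipartite conditional distributions $p_{2\leftarrow3}(o_2o_3|i_2i_3,\lambda)$ satisfying, for every $\lambda$, every $i_3,o_3$ and every $i_2,i_2'$, $$\sum_{o_2}p_{2\leftarrow3}(o_2o_3|i_2i_3,\lambda)=\sum_{o_2}p_{2\leftarrow3}(o_2o_3|i_2'i_3,\lambda)$$ (i.e. no signaling from party 2 to party 3; signaling from 3 to 2 is allowed), such that $$p^G(o_1o_2o_3|i_1i_2i_3)=\sum_{\lambda\in\Lambda}p_\lambda\, p(o_1|i_1,\lambda)\,p_{2\leftarrow3}(o_2o_3|i_2i_3,\lambda)$$ for all inputs and outputs. In particular, $P^G$ admits a bilocal decomposition with respect to the partition $1|23$ in which no term displays signaling in both directions.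
   Context: Three parties; party $k\in\{1,2,3\}$ has input $i_k\in\{0,1\}$ and output $o_k\in\{0,1\}$. A tripartite correlation is a family of conditional probability distributions $p(o_1o_2o_3|i_1i_2i_3)$. Let $a^{\pm}=\frac14\left(1\pm\frac{1}{\sqrt2}\right)$. The correlation $P^G$ is given by the following matrix, whose rows are indexed by $(i_1i_2i_3)$ and columns by $(o_1o_2o_3)$, both in lexicographic order $000,001,010,011,100,101,110,111$: $$P^G=\frac12\begin{pmatrix} 2a^+&2a^-&0&0&0&0&2a^-&2a^+\\ 2a^+&2a^-&0&0&0&0&2a^-&2a^+\\ a^+&a^-&a^+&a^-&a^-&a^+&a^-&a^+\\ a^+&a^-&a^+&a^-&a^-&a^+&a^-&a^+\\ a^+&a^-&a^-&a^+&a^+&a^-&a^-&a^+\\ a^+&a^-&a^-&a^+&a^+&a^-&a^-&a^+\\ a^+&a^-&a^-&a^+&a^-&a^+&a^+&a^-\\ a^-&a^+&a^+&a^-&a^+&a^-&a^-&a^+ \end{pmatrix}.$$ (It is the quantum correlation obtained from the state $\frac{1}{\sqrt2}(|000\rangle+|111\rangle)$ when parties 1 and 2 measure $\sigma_z$ on input 0 and $\sigma_x$ on input 1, party 3 measures $(\sigma_z+\sigma_x)/\sqrt2$ on input 0 and $(\sigma_z-\sigma_x)/\sqrt2$ on input 1, and outcome $+1$ is recorded as 0, $-1$ as 1.) *)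

(* Inputs/outputs in {0,1} are encoded as bool (false = 0, true = 1). *)
From mathcomp Require Import all_boot all_order all_algebra.
From mathcomp Require Import reals.
Set Implicit Arguments. Unset Strict Implicit. Unset Printing Implicit Defensive.
Import Order.TTheory GRing.Theory Num.Theory.
Local Open Scope ring_scope.

Definition b2n (b : bool) : nat := if b then 1%N else 0%N.

Definition idx3 (x1 x2 x3 : bool) : nat := (4 * b2n x1 + 2 * b2n x2 + b2n x3)%N.

Section PG.
Variable R : realType.

Definition ap : R := (1 + (Num.sqrt 2)^-1) / 4.
Definition am : R := (1 - (Num.sqrt 2)^-1) / 4.

(* The matrix 2 * P^G, rows (i1 i2 i3), columns (o1 o2 o3), lexicographic. *)
Definition PG_rows : seq (seq R) :=
  [:: [:: 2*ap; 2*am; 0; 0; 0; 0; 2*am; 2*ap];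
      [:: 2*ap; 2*am; 0; 0; 0; 0; 2*am; 2*ap];
      [:: ap; am; ap; am; am; ap; am; ap];
      [:: ap; am; ap; am; am; ap; am; ap];
      [:: ap; am; am; ap; ap; am; am; ap];
      [:: ap; am; am; ap; ap; am; am; ap];
      [:: ap; am; am; ap; am; ap; ap; am];
      [:: am; ap; ap; am; ap; am; am; ap] ].

Definition PG (o1 o2 o3 i1 i2 i3 : bool) : R :=
  (nth 0 (nth [::] PG_rows (idx3 i1 i2 i3)) (idx3 o1 o2 o3)) / 2.
End PG.

From mathcomp Require Import all_boot all_order all_algebra.
From mathcomp Require Import reals.
From mathcomp Require Import ring lra.
Set Implicit Arguments. Unset Strict Implicit. Unset Printing Implicit Defensive.
Import Order.TTheory GRing.Theory Num.Theory.
Local Open Scope ring_scope.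

(* Take the hidden variable l = (a0, a1) uniformly distributed
   over two bits.  Party 1 answers deterministically o1 = a_(i1).  Parties 2
   and 3 share a "sequential" box in which party 3 moves first: it outputs
   o3 = a0 with probability t = 2 a^+ = (1 + 1/sqrt 2)/2 (and the flipped
   bit otherwise), ignoring its input; then party 2, who sees (o3, i3),
   outputs o2 = a0 if i2 = 0 and o2 = a1 (+) o3 (+) i3 with probability t
   if i2 = 1.  Such a box is a probability distribution whose o3-marginal
   does not depend on i2, i.e. party 2 cannot signal to party 3.
   The file first treats biased bits (Bernoulli distributions), then the
   general sequential boxes, then the numeric facts about a^+ and a^-, and
   finally checks the 64 entries of the decomposition of P^G. *)

Section BiasedBit.
Variable R : numFieldType.

Definition bern (t : R) (b o : bool) : R := if o == b then t else 1 - t.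

Lemma bern_ge0 (t : R) b o : 0 <= t <= 1 -> 0 <= bern t b o.
Proof. by case/andP=> t0 t1; rewrite /bern; case: ifP; rewrite ?subr_ge0. Qed.

Lemma bern_sum1 (t : R) b : \sum_(o : bool) bern t b o = 1.
Proof. by rewrite big_bool /bern; case: b => /=; ring. Qed.

Lemma bern1_ge0 b o : 0 <= bern 1 b o.
Proof. by rewrite /bern; case: ifP; rewrite ?subrr. Qed.

End BiasedBit.

Section SequentialBox.
Variable R : numFieldType.

(* A bipartite box in which party 3 answers first, with law q(o3 | i3), and
   party 2 then answers with law r(o2 | o3 i2 i3), knowing party 3's data. *)
Variables (q : bool -> bool -> R) (r : bool -> bool -> bool -> bool -> R).

Definition seq_box (o2 o3 i2 i3 : bool) : R := q o3 i3 * r o2 o3 i2 i3.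

Hypothesis q_ge0 : forall o3 i3, 0 <= q o3 i3.
Hypothesis r_ge0 : forall o2 o3 i2 i3, 0 <= r o2 o3 i2 i3.
Hypothesis q_sum1 : forall i3, \sum_(o3 : bool) q o3 i3 = 1.
Hypothesis r_sum1 : forall o3 i2 i3, \sum_(o2 : bool) r o2 o3 i2 i3 = 1.

Lemma seq_box_ge0 o2 o3 i2 i3 : 0 <= seq_box o2 o3 i2 i3.
Proof. exact: mulr_ge0. Qed.

Lemma seq_box_marginal3 o3 i2 i3 : \sum_(o2 : bool) seq_box o2 o3 i2 i3 = q o3 i3.
Proof. by rewrite -mulr_sumr r_sum1 mulr1. Qed.

Lemma seq_box_sum1 i2 i3 : \sum_(o2 : bool) \sum_(o3 : bool) seq_box o2 o3 i2 i3 = 1.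
Proof.
by rewrite exchange_big /=; under eq_bigr do rewrite seq_box_marginal3.
Qed.

Lemma seq_box_no_signal_2to3 o3 i2 i2' i3 :
  \sum_(o2 : bool) seq_box o2 o3 i2 i3 = \sum_(o2 : bool) seq_box o2 o3 i2' i3.
Proof. by rewrite !seq_box_marginal3. Qed.

End SequentialBox.

Section Amplitudes.
Variable R : realType.

Lemma sqrt2_neq0 : Num.sqrt (2 : R) != 0.
Proof. by rewrite sqrtr_eq0 -ltNge ltr0n. Qed.

Lemma am_eq : am R = 1/2 - ap R.
Proof. by rewrite /am /ap; field; rewrite sqrt2_neq0. Qed.

(* 1/sqrt 2 <= 1, hence both a^+ and a^- are nonnegative. *)
Lemma ap_am_ge0 : 0 <= ap R /\ 0 <= am R.
Proof.
have s1 : 1 <= Num.sqrt (2 : R).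
  by rewrite -[X in X <= _]sqrtr1; apply: ler_wsqrtr; rewrite ler1n.
have inv_le1 : (Num.sqrt (2 : R))^-1 <= 1 by rewrite invf_le1 // (lt_le_trans _ s1).
have inv_ge0 : 0 <= (Num.sqrt (2 : R))^-1 by rewrite invr_ge0 sqrtr_ge0.
by rewrite /ap /am; split; apply: divr_ge0; lra.
Qed.

Lemma bias_prob : 0 <= 2 * ap R <= 1.
Proof. by have [p m] := ap_am_ge0; have e := am_eq; apply/andP; split; lra. Qed.

End Amplitudes.

Section Model.
Variable R : realType.

(* The hidden variable l : 'I_4 encodes the two bits (a0, a1). *)
Definition a0 (l : 'I_4) : bool := odd l.
Definition a1 (l : 'I_4) : bool := (1 < l)%N.

Definition weight (l : 'I_4) : R := 1 / 4.

Definition party1 (o1 i1 : bool) (l : 'I_4) : R :=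
  bern 1 (if i1 then a1 l else a0 l) o1.

Definition party3 (l : 'I_4) (o3 i3 : bool) : R := bern (2 * ap R) (a0 l) o3.

Definition party2 (l : 'I_4) (o2 o3 i2 i3 : bool) : R :=
  if i2 then bern (2 * ap R) (a1 l (+) o3 (+) i3) o2 else bern 1 (a0 l) o2.

Definition box23 (o2 o3 i2 i3 : bool) (l : 'I_4) : R :=
  seq_box (party3 l) (party2 l) o2 o3 i2 i3.

Lemma party2_ge0 l o2 o3 i2 i3 : 0 <= party2 l o2 o3 i2 i3.
Proof.
by rewrite /party2; case: i2; [apply: bern_ge0; apply: bias_prob | apply: bern1_ge0].
Qed.

Lemma party2_sum1 l o3 i2 i3 : \sum_(o2 : bool) party2 l o2 o3 i2 i3 = 1.
Proof. by rewrite /party2; case: i2; apply: bern_sum1. Qed.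

Lemma PG_decomposition o1 o2 o3 i1 i2 i3 :
  PG R o1 o2 o3 i1 i2 i3
  = \sum_(l < 4) weight l * party1 o1 i1 l * box23 o2 o3 i2 i3 l.
Proof.
rewrite !big_ord_recr big_ord0 /=.
rewrite /PG /weight /party1 /box23 /seq_box /party3 /party2 /bern /a0 /a1 /=.
by case: o1; case: o2; case: o3; case: i1; case: i2; case: i3 => /=;
  rewrite ?am_eq; field.
Qed.

End Model.

Theorem proposition1 (R : realType) :
  exists (n : nat) (pl : 'I_n -> R)
         (p1 : bool -> bool -> 'I_n -> R)            (* p(o1 | i1, l) *)
         (p23 : bool -> bool -> bool -> bool -> 'I_n -> R), (* p(o2 o3 | i2 i3, l) *)
    [/\ (forall l, 0 <= pl l) /\ \sum_(l < n) pl l = 1,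
        (forall o1 i1 l, 0 <= p1 o1 i1 l) /\
          (forall i1 l, \sum_(o1 : bool) p1 o1 i1 l = 1),
        (forall o2 o3 i2 i3 l, 0 <= p23 o2 o3 i2 i3 l) /\
          (forall i2 i3 l, \sum_(o2 : bool) \sum_(o3 : bool) p23 o2 o3 i2 i3 l = 1),
        (forall l i3 o3 i2 i2',
            \sum_(o2 : bool) p23 o2 o3 i2 i3 l = \sum_(o2 : bool) p23 o2 o3 i2' i3 l)
      & forall o1 o2 o3 i1 i2 i3,
          PG R o1 o2 o3 i1 i2 i3
          = \sum_(l < n) pl l * p1 o1 i1 l * p23 o2 o3 i2 i3 l].
Proof.
have q_ge0 l o3 i3 : 0 <= party3 R l o3 i3 by apply: bern_ge0; apply: bias_prob.
have q_sum1 l i3 : \sum_(o3 : bool) party3 R l o3 i3 = 1 by apply: bern_sum1.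
exists 4%N, (@weight R), (@party1 R), (@box23 R); split.
- split=> [l|]; first by rewrite /weight divr_ge0.
  by rewrite /weight !big_ord_recr big_ord0 /=; field.
- by split=> *; [apply: bern1_ge0 | apply: bern_sum1].
- split=> *; first by apply: seq_box_ge0 => //; apply: party2_ge0.
  by apply: seq_box_sum1 => // *; apply: party2_sum1.
- by move=> *; apply: seq_box_no_signal_2to3 => // *; apply: party2_sum1.
- exact: PG_decomposition.
Qed.
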